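(* Let $T$, $S$, $A$ be closed subspaces in $X^2$ with $D(T)=D(S)=:D\subset D(A)$ and $T=S+A$. Then $T(0)^\perp\subset S(0)^\perp$ and $T(0)^\perp\subset A(0)^\perp$; let $P:S(0)^\perp\to T(0)^\perp$ and $Q:A(0)^\perp\to T(0)^\perp$ be the orthogonal projections. Then $$T_sx=PS_sx+QA_sx\quad\text{for all }x\in D.$$ Furthermore, if $S$ and $A$ are Hermitian subspaces in $X^2$, then $PS_s$ and $QA_s$ (restricted to $D$) are Hermitian operators in $D$, i.e. $\langle PS_sx,y\rangle=\langle x,PS_sy\rangle$ and $\langle QA_sx,y\rangle=\langle x,QA_sy\rangle$ for all $x,y\in D$.
   Context: $X$ is a complex Hilbert space and $X^2=X\times X$ carries the inner product $\langle (x,f),(y,g)\rangle=\langle x,y\rangle+\langle f,g\rangle$. A subspace $T$ in $X^2$ means a linear subspace of $X^2$ (a linear relation); a linear operator in $X$ is identified with its graph. Notation: $D(T)=\{x:(x,f)\in T \text{ for some } f\}$, $R(T)=\{f:(x,f)\in T \text{ for some } x\}$, $T(x)=\{f:(x,f)\in T\}$. The adjoint is $T^*=\{(y,g)\in X^2:\langle g,x\rangle=\langle y,f\rangle \text{ for all }(x,f)\in T\}$; $T$ is Hermitian if $T\subset T^*$ and self-adjoint if $T=T^*$. For subspaces $S,A$ in $X^2$, $S+A=\{(x,f+g):(x,f)\in S,(x,g)\in A\}$. For a closed subspace $T$, set $T_\infty=\{(0,g)\in X^2:(0,g)\in T\}$ and $T_s=T\ominus T_\infty$ (orthogonal complement of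 $T_\infty$ in $T$), so $T=T_s\oplus T_\infty$; $T_s$ is the graph of a linear operator (the operator part of $T$) with $D(T_s)=D(T)$ and $R(T_s)\subset T(0)^\perp$, and it is regarded as an operator in $T(0)^\perp$. *)

From Stdlib Require Import Reals ClassicalEpsilon.
Open Scope R_scope.
Set Implicit Arguments.

Record C := mkC { Cre : R; Cim : R }.
Definition C0 : C := mkC 0 0.
Definition C1 : C := mkC 1 0.
Definition Cadd (a b : C) : C := mkC (Cre a + Cre b) (Cim a + Cim b).
Definition Cmul (a b : C) : C :=
  mkC (Cre a * Cre b - Cim a * Cim b) (Cre a * Cim b + Cim a * Cre b).
Definition Cconj (a : C) : C := mkC (Cre a) (- Cim a).

(** Complex Hilbert space: complex inner product space, complete for the norm.
    Inner product linear in the first argument, conjugate-linear in the second. *)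
Record Hilbert := {
  H :> Type;
  hzero : H;
  hadd : H -> H -> H;
  hopp : H -> H;
  hscal : C -> H -> H;
  hinner : H -> H -> C;
  hadd_assoc : forall x y z, hadd x (hadd y z) = hadd (hadd x y) z;
  hadd_comm : forall x y, hadd x y = hadd y x;
  hadd_0l : forall x, hadd hzero x = x;
  hadd_oppl : forall x, hadd (hopp x) x = hzero;
  hscal_1 : forall x, hscal C1 x = x;
  hscal_mul : forall a b x, hscal a (hscal b x) = hscal (Cmul a b) x;
  hscal_addr : forall a x y, hscal a (hadd x y) = hadd (hscal a x) (hscal a y);
  hscal_addl : forall a b x, hscal (Cadd a b) x = hadd (hscal a x) (hscal b x);
  hinner_conj : forall x y, hinner y x = Cconj (hinner x y);
  hinner_addl : forall x y z, hinner (hadd x y) z = Cadd (hinner x z) (hinner y z);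
  hinner_scall : forall a x y, hinner (hscal a x) y = Cmul a (hinner x y);
  hinner_pos : forall x, 0 <= Cre (hinner x x);
  hinner_def : forall x, hinner x x = C0 -> x = hzero;
  hcomplete : forall u : nat -> H,
    (forall eps, 0 < eps -> exists N, forall n m, (N <= n)%nat -> (N <= m)%nat ->
        sqrt (Cre (hinner (hadd (u n) (hopp (u m))) (hadd (u n) (hopp (u m))))) < eps) ->
    exists l, forall eps, 0 < eps -> exists N, forall n, (N <= n)%nat ->
        sqrt (Cre (hinner (hadd (u n) (hopp l)) (hadd (u n) (hopp l)))) < eps
}.

Section Ops.
Variable X : Hilbert.

Definition hsub (x y : X) : X := hadd X x (hopp X y).
Definition hnorm (x : X) : R := sqrt (Cre (hinner X x x)).

Definition converges (u : nat -> X) (l : X) : Prop :=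
  forall eps, 0 < eps -> exists N, forall n, (N <= n)%nat -> hnorm (hsub (u n) l) < eps.

(** A subspace in X^2 (linear relation) is a predicate on pairs, written T x f. *)
Definition rel := X -> X -> Prop.

Definition is_linear_rel (T : rel) : Prop :=
  T (hzero X) (hzero X) /\
  (forall x f y g, T x f -> T y g -> T (hadd X x y) (hadd X f g)) /\
  (forall a x f, T x f -> T (hscal X a x) (hscal X a f)).

(** Closed in X^2 (sequential closedness; convergence in X^2 is componentwise). *)
Definition is_closed_rel (T : rel) : Prop :=
  forall (u v : nat -> X) x f, (forall n, T (u n) (v n)) ->
    converges u x -> converges v f -> T x f.

Definition closed_subspace (T : rel) : Prop := is_linear_rel T /\ is_closed_rel T.

Definition dom (T : rel) (x : X) : Prop := exists f, T x f.
Definition mul0 (T : rel) (f : X) : Prop := T (hzero X) f.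

Definition perp (M : X -> Prop) (v : X) : Prop :=
  forall w, M w -> hinner X v w = C0.

Definition subset (M N : X -> Prop) : Prop := forall v, M v -> N v.

Definition adjoint (T : rel) : rel :=
  fun y g => forall x f, T x f -> hinner X g x = hinner X y f.
Definition hermitian_rel (T : rel) : Prop := forall x f, T x f -> adjoint T x f.

Definition rel_sum (S A : rel) : rel :=
  fun x h => exists f g, S x f /\ A x g /\ h = hadd X f g.

(** T_s = T ominus T_infty: the pairs (x,f) in T orthogonal to every (0,g) in T,
    i.e. with f in T(0)^perp. *)
Definition op_part_rel (T : rel) : rel := fun x f => T x f /\ perp (mul0 T) f.

Definition op_part (T : rel) (x : X) : X :=
  epsilon (inhabits (hzero X)) (fun f => op_part_rel T x f).

Definition is_proj (M : X -> Prop) (v p : X) : Prop := M p /\ perp M (hsub v p).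
Definition proj (M : X -> Prop) (v : X) : X :=
  epsilon (inhabits (hzero X)) (fun p => is_proj M v p).

End Ops.

Arguments hsub {X}. Arguments hnorm {X}. Arguments converges {X}.
Arguments is_linear_rel {X}. Arguments is_closed_rel {X}.
Arguments closed_subspace {X}. Arguments dom {X}. Arguments mul0 {X}.
Arguments perp {X}. Arguments subset {X}. Arguments adjoint {X}.
Arguments hermitian_rel {X}. Arguments rel_sum {X}.
Arguments op_part_rel {X}. Arguments op_part {X}.
Arguments is_proj {X}. Arguments proj {X}.

(* Since S(0) and A(0) lie in T(0), the complement T(0)^perp lies in both
   S(0)^perp and A(0)^perp.  For x in D write T_s x = f + g with (x,f) in S and
   (x,g) in A; then f - S_s x is in S(0) and g - A_s x in A(0), so
   T_s x = S_s x + A_s x + t0 with t0 in T(0).  The projection onto T(0)^perp is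
   additive, fixes T_s x and kills t0, which gives the decomposition.  If S and A
   are Hermitian then so is T = S + A, hence D is orthogonal to T(0); for y in D
   the projection can therefore be dropped in <P S_s x, y>, and the symmetry of
   P S_s reduces to that of S.
   Operator parts and projections exist because T(0) is closed: a minimizing
   sequence for the distance to a closed subspace is Cauchy by the parallelogram
   law, its limit is a nearest point, and a nearest point q of v gives v - q
   orthogonal to the subspace. *)

From Stdlib Require Import Reals ClassicalEpsilon Classical Lra Lia List.
Import ListNotations.

Lemma C_ext (a b : C) : Cre a = Cre b -> Cim a = Cim b -> a = b.
Proof. destruct a, b; simpl; intros; subst; reflexivity. Qed.

Ltac Csolve := apply C_ext; simpl; first [ring | lra].

Definition Cm1 : C := mkC (-1) 0.

Inductive hterm :=
  | TAtom (k : nat) | TZero | TAdd (a b : hterm) | TSub (a b : hterm)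
  | TOpp (a : hterm) | TScal (c : C) (a : hterm).

Fixpoint hterm_coef (t : hterm) : nat -> C :=
  match t with
  | TAtom k => fun i => if Nat.eqb i k then C1 else C0
  | TZero => fun _ => C0
  | TAdd a b => fun i => Cadd (hterm_coef a i) (hterm_coef b i)
  | TSub a b => fun i => Cadd (hterm_coef a i) (Cmul Cm1 (hterm_coef b i))
  | TOpp a => fun i => Cmul Cm1 (hterm_coef a i)
  | TScal c a => fun i => Cmul c (hterm_coef a i)
  end.

Fixpoint hterm_wf (n : nat) (t : hterm) : Prop :=
  match t with
  | TAtom k => (k < n)%nat
  | TZero => True
  | TAdd a b | TSub a b => hterm_wf n a /\ hterm_wf n b
  | TOpp a | TScal _ a => hterm_wf n a
  end.

Section HilbertAlgebra.
Context {X : Hilbert}.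

Lemma hadd_0r (x : X) : hadd X x (hzero X) = x.
Proof. rewrite hadd_comm; apply hadd_0l. Qed.

Lemma hadd_oppr (x : X) : hadd X x (hopp X x) = hzero X.
Proof. rewrite hadd_comm; apply hadd_oppl. Qed.

Lemma hadd_idem (y : X) : hadd X y y = y -> y = hzero X.
Proof.
  intro E.
  assert (E' : hadd X (hopp X y) (hadd X y y) = hadd X (hopp X y) y) by now rewrite E.
  now rewrite hadd_assoc, hadd_oppl, hadd_0l in E'.
Qed.

Lemma hscal_0l (x : X) : hscal X C0 x = hzero X.
Proof. apply hadd_idem. rewrite <- hscal_addl. f_equal. Csolve. Qed.

Lemma hscal_0r (a : C) : hscal X a (hzero X) = hzero X.
Proof. apply hadd_idem. now rewrite <- hscal_addr, hadd_0l. Qed.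

Lemma hopp_scal (x : X) : hopp X x = hscal X Cm1 x.
Proof.
  assert (E : hadd X (hscal X Cm1 x) x = hzero X).
  { rewrite <- (hscal_1 X x) at 2. rewrite <- hscal_addl, <- (hscal_0l x). f_equal; Csolve. }
  now rewrite <- (hadd_0l X (hopp X x)), <- E, <- hadd_assoc, hadd_oppr, hadd_0r.
Qed.

Lemma hadd_swap4 (a b c d : X) :
  hadd X (hadd X a b) (hadd X c d) = hadd X (hadd X a c) (hadd X b d).
Proof.
  rewrite <- !hadd_assoc. f_equal. rewrite !hadd_assoc. f_equal. apply hadd_comm.
Qed.

Fixpoint lincomb (env : list X) (c : nat -> C) : X :=
  match env with
  | [] => hzero X
  | x :: env' => hadd X (hscal X (c O) x) (lincomb env' (fun i => c (S i)))
  end.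

Lemma lincomb_add env : forall c d,
  hadd X (lincomb env c) (lincomb env d) = lincomb env (fun i => Cadd (c i) (d i)).
Proof.
  induction env as [|x env IH]; intros c d; simpl.
  - apply hadd_0l.
  - now rewrite hadd_swap4, IH, hscal_addl.
Qed.

Lemma lincomb_scal env : forall a c,
  hscal X a (lincomb env c) = lincomb env (fun i => Cmul a (c i)).
Proof.
  induction env as [|x env IH]; intros a c; simpl.
  - apply hscal_0r.
  - now rewrite hscal_addr, IH, hscal_mul.
Qed.

Lemma lincomb_0 env : lincomb env (fun _ => C0) = hzero X.
Proof.
  induction env as [|x env IH]; simpl; auto.
  now rewrite IH, hscal_0l, hadd_0l.
Qed.

Lemma lincomb_nth env : forall k, (k < length env)%nat ->
  lincomb env (fun i => if Nat.eqb i k then C1 else C0) = nth k env (hzero X).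
Proof.
  induction env as [|x env IH]; intros k Hk; simpl in *; [lia|].
  destruct k as [|k]; simpl.
  - now rewrite hscal_1, lincomb_0, hadd_0r.
  - rewrite hscal_0l, hadd_0l. apply IH. lia.
Qed.

Lemma lincomb_ext env : forall c d,
  (forall i, (i < length env)%nat -> c i = d i) -> lincomb env c = lincomb env d.
Proof.
  induction env as [|x env IH]; intros c d E; simpl; auto.
  rewrite (E 0%nat) by (simpl; lia). f_equal. apply IH. intros i Hi. apply E. simpl; lia.
Qed.

Fixpoint hterm_eval (env : list X) (t : hterm) : X :=
  match t with
  | TAtom k => nth k env (hzero X)
  | TZero => hzero X
  | TAdd a b => hadd X (hterm_eval env a) (hterm_eval env b)
  | TSub a b => hsub (hterm_eval env a) (hterm_eval env b)
  | TOpp a => hopp X (hterm_eval env a)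
  | TScal c a => hscal X c (hterm_eval env a)
  end.

Lemma hterm_eval_lincomb env t :
  hterm_wf (length env) t -> hterm_eval env t = lincomb env (hterm_coef t).
Proof.
  induction t; simpl; intro W.
  - now rewrite lincomb_nth.
  - now rewrite lincomb_0.
  - destruct W. now rewrite IHt1, IHt2, lincomb_add.
  - destruct W. unfold hsub. now rewrite IHt1, IHt2, hopp_scal, lincomb_scal, lincomb_add.
  - now rewrite IHt, hopp_scal, lincomb_scal.
  - now rewrite IHt, lincomb_scal.
Qed.

Lemma hterm_eval_eq env t1 t2 :
  hterm_wf (length env) t1 -> hterm_wf (length env) t2 ->
  (forall i, (i < length env)%nat -> hterm_coef t1 i = hterm_coef t2 i) ->
  hterm_eval env t1 = hterm_eval env t2.
Proof.
  intros W1 W2 E. rewrite !hterm_eval_lincomb by auto. now apply lincomb_ext.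
Qed.

End HilbertAlgebra.

Ltac find_idx e l :=
  match l with
  | cons e _ => constr:(O)
  | cons _ ?l' => let n := find_idx e l' in constr:(S n)
  end.

Ltac collect_atoms e l :=
  lazymatch e with
  | hadd _ ?a ?b => let l' := collect_atoms a l in collect_atoms b l'
  | hsub ?a ?b => let l' := collect_atoms a l in collect_atoms b l'
  | hopp _ ?a => collect_atoms a l
  | hscal _ _ ?a => collect_atoms a l
  | hzero _ => l
  | _ => match constr:(tt) with
         | _ => let _ := find_idx e l in l
         | _ => constr:(cons e l)
         end
  end.

Ltac reify e l :=
  lazymatch e with
  | hadd _ ?a ?b => let ra := reify a l in let rb := reify b l in constr:(TAdd ra rb)
  | hsub ?a ?b => let ra := reify a l in let rb := reify b l in constr:(TSub ra rb)
  | hopp _ ?a => let ra := reify a l in constr:(TOpp ra)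
  | hscal _ ?c ?a => let ra := reify a l in constr:(TScal c ra)
  | hzero _ => constr:(TZero)
  | _ => let n := find_idx e l in constr:(TAtom n)
  end.

(* Proves an equation between linear expressions in a Hilbert space by
   comparing the complex coefficient of every atom. *)
Ltac lin :=
  lazymatch goal with
  | |- @eq ?T ?e1 ?e2 =>
    let l0 := collect_atoms e1 (@nil T) in
    let l := collect_atoms e2 l0 in
    let t1 := reify e1 l in let t2 := reify e2 l in
    change (hterm_eval l t1 = hterm_eval l t2);
    apply hterm_eval_eq; [simpl; repeat split; lia | simpl; repeat split; lia |];
    let i := fresh "i" in let Hi := fresh "Hi" in
    intros i Hi; simpl in Hi;
    repeat (first [ exfalso; lia | destruct i as [|i]; [simpl; unfold Cm1, C0, C1; Csolve |]])
  end.

Section InnerProduct.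
Context {X : Hilbert}.

Lemma hinner_addr (x y z : X) :
  hinner X x (hadd X y z) = Cadd (hinner X x y) (hinner X x z).
Proof.
  rewrite hinner_conj, hinner_addl, (hinner_conj X y x), (hinner_conj X z x). Csolve.
Qed.

Lemma hinner_scalr a (x y : X) :
  hinner X x (hscal X a y) = Cmul (Cconj a) (hinner X x y).
Proof. rewrite hinner_conj, hinner_scall, (hinner_conj X y x). Csolve. Qed.

Lemma hinner_subl (x y z : X) :
  hinner X (hsub x y) z = Cadd (hinner X x z) (Cmul Cm1 (hinner X y z)).
Proof. unfold hsub. now rewrite hinner_addl, hopp_scal, hinner_scall. Qed.

Lemma hinner_0l (y : X) : hinner X (hzero X) y = C0.
Proof. rewrite <- (hscal_0l y), hinner_scall. Csolve. Qed.

Lemma hinner_0r (y : X) : hinner X y (hzero X) = C0.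
Proof. rewrite hinner_conj, hinner_0l. Csolve. Qed.

Lemma hinner_self_im (x : X) : Cim (hinner X x x) = 0.
Proof.
  pose proof (hinner_conj X x x) as E. destruct (hinner X x x) as [r i].
  injection E. simpl. lra.
Qed.

Definition sqnorm (x : X) : R := Cre (hinner X x x).

Lemma sqnorm_ge0 (x : X) : 0 <= sqnorm x.
Proof. apply hinner_pos. Qed.

Lemma sqnorm_eq0 (x : X) : sqnorm x = 0 -> x = hzero X.
Proof. intro E. apply hinner_def, C_ext; [exact E | apply hinner_self_im]. Qed.

Lemma sqnorm_0 : sqnorm (hzero X) = 0.
Proof. unfold sqnorm. now rewrite hinner_0l. Qed.

Lemma sqnorm_lincomb2 (a b : C) (x y : X) :
  sqnorm (hadd X (hscal X a x) (hscal X b y)) =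
  (Cre a * Cre a + Cim a * Cim a) * sqnorm x + (Cre b * Cre b + Cim b * Cim b) * sqnorm y
  + 2 * ((Cre a * Cre b + Cim a * Cim b) * Cre (hinner X x y)
         - (Cim a * Cre b - Cre a * Cim b) * Cim (hinner X x y)).
Proof.
  unfold sqnorm. rewrite hinner_addl, !hinner_addr, !hinner_scall, !hinner_scalr.
  rewrite (hinner_conj X y x).
  pose proof (hinner_self_im x). pose proof (hinner_self_im y).
  destruct (hinner X x x), (hinner X y y), (hinner X x y), a, b. simpl in *. subst. ring.
Qed.

(* The parallelogram law for [v - u] and [v - w]. *)
Lemma sqnorm_sub_le_midpoint (v u w : X) (d : R) :
  d <= sqnorm (hsub v (hadd X (hscal X (mkC (/2) 0) u) (hscal X (mkC (/2) 0) w))) ->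
  sqnorm (hsub u w) <= 2 * (sqnorm (hsub v u) - d) + 2 * (sqnorm (hsub v w) - d).
Proof.
  replace (hsub v (hadd X (hscal X (mkC (/2) 0) u) (hscal X (mkC (/2) 0) w))) with
    (hadd X (hscal X (mkC (/2) 0) (hsub v u)) (hscal X (mkC (/2) 0) (hsub v w))) by lin.
  replace (hsub u w) with (hadd X (hscal X Cm1 (hsub v u)) (hscal X C1 (hsub v w))) by lin.
  rewrite !sqnorm_lincomb2. simpl. lra.
Qed.

Lemma sqnorm_add_le (dl : R) (a b : X) : 0 < dl ->
  dl * sqnorm (hadd X a b) <= dl * (1 + dl) * sqnorm a + (1 + dl) * sqnorm b.
Proof.
  intro Hdl.
  pose proof (sqnorm_ge0 (hadd X (hscal X (mkC dl 0) a) (hscal X Cm1 b))) as P.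
  replace (hadd X a b) with (hadd X (hscal X C1 a) (hscal X C1 b)) by lin.
  rewrite sqnorm_lincomb2 in *. simpl in *.
  pose proof (sqnorm_ge0 a). pose proof (sqnorm_ge0 b). nra.
Qed.

End InnerProduct.

Section Projection.
Context {X : Hilbert}.

Definition is_subspace (M : X -> Prop) : Prop :=
  M (hzero X) /\ (forall x y, M x -> M y -> M (hadd X x y)) /\
  (forall a x, M x -> M (hscal X a x)).

Definition is_closed_subspace (M : X -> Prop) : Prop :=
  is_subspace M /\ (forall u q, (forall n, M (u n)) -> converges u q -> M q).

Lemma perp_add (M : X -> Prop) x y : perp M x -> perp M y -> perp M (hadd X x y).
Proof. intros Hx Hy w Hw. rewrite hinner_addl, Hx, Hy by auto. Csolve. Qed.

Lemma perp_scal (M : X -> Prop) a x : perp M x -> perp M (hscal X a x).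
Proof. intros Hx w Hw. rewrite hinner_scall, Hx by auto. Csolve. Qed.

Lemma perp_0 (M : X -> Prop) : perp M (hzero X).
Proof. intros w _. apply hinner_0l. Qed.

Lemma perp_sub (M : X -> Prop) x y : perp M x -> perp M y -> perp M (hsub x y).
Proof.
  intros. unfold hsub. rewrite hopp_scal. apply perp_add; auto. now apply perp_scal.
Qed.

Lemma perp_perp (M : X -> Prop) q : M q -> perp (perp M) q.
Proof. intros Hq w Hw. rewrite hinner_conj, Hw by auto. Csolve. Qed.

Lemma perp_antitone (M M' : X -> Prop) : subset M M' -> subset (perp M') (perp M).
Proof. intros HM v Hv w Hw. now apply Hv, HM. Qed.

Lemma eq_of_hsub0 (p p' : X) : hsub p p' = hzero X -> p = p'.
Proof.
  intro E. transitivity (hadd X (hsub p p') p'); [lin|]. now rewrite E, hadd_0l.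
Qed.

Lemma exists_infimum (A : Type) (P : A -> Prop) (f : A -> R) :
  (exists a, P a) -> (forall a, P a -> 0 <= f a) ->
  exists d, (forall a, P a -> d <= f a) /\
            (forall e, 0 < e -> exists a, P a /\ f a < d + e).
Proof.
  intros [a0 Pa0] Hf.
  destruct (completeness (fun r => exists a, P a /\ r = - f a)) as [L [HL1 HL2]].
  - exists 0. intros r [a [Pa ->]]. specialize (Hf a Pa). lra.
  - exists (- f a0). now exists a0.
  - exists (- L). split.
    + intros a Pa. assert (- f a <= L) by (apply HL1; now exists a). lra.
    + intros e He. apply NNPP. intro Hn.
      assert (L <= L - e); [|lra].
      apply HL2. intros r [a [Pa ->]].
      destruct (Rlt_or_le (f a) (- L + e)); [exfalso; apply Hn; now exists a | lra].
Qed.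

Lemma inv_INR_S_pos (n : nat) : 0 < / INR (S n).
Proof. apply Rinv_0_lt_compat, lt_0_INR; lia. Qed.

Lemma inv_INR_S_small (r : R) : 0 < r ->
  exists N0, forall n, (N0 <= n)%nat -> / INR (S n) < r.
Proof.
  intro Hr. destruct (archimed_cor1 r Hr) as [N0 [H1 H2]]. exists N0. intros n Hn.
  apply Rle_lt_trans with (/ INR N0); auto.
  apply Rinv_le_contravar; [apply lt_0_INR; lia | apply le_INR; lia].
Qed.

Lemma converges_sqnorm (u : nat -> X) q : converges u q ->
  forall r, 0 < r -> exists N0, forall n, (N0 <= n)%nat -> sqnorm (hsub (u n) q) < r.
Proof.
  intros Hc r Hr. destruct (Hc (sqrt r) (sqrt_lt_R0 r Hr)) as [N0 HN]. exists N0.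
  intros n Hn. apply sqrt_lt_0_alt, HN, Hn.
Qed.

Lemma le_of_le_add_eps (x y : R) : (forall e, 0 < e -> x <= y + e) -> x <= y.
Proof.
  intro H. destruct (Rle_or_lt x y) as [h|h]; auto.
  specialize (H ((x - y) / 2) ltac:(lra)). lra.
Qed.

Lemma sqnorm_limit_le (u : nat -> X) q v d : converges u q ->
  (forall e, 0 < e -> exists N0, forall n, (N0 <= n)%nat -> sqnorm (hsub v (u n)) <= d + e) ->
  sqnorm (hsub v q) <= d.
Proof.
  intros Hc Hu.
  assert (Hev : forall e, 0 < e -> exists n,
             sqnorm (hsub v (u n)) <= d + e /\ sqnorm (hsub (u n) q) < e).
  { intros e He. destruct (Hu e He) as [N1 H1].
    destruct (converges_sqnorm u q Hc e He) as [N2 H2].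
    exists (N1 + N2)%nat. split; [apply H1 | apply H2]; lia. }
  assert (Hd : 0 <= d).
  { apply le_of_le_add_eps. intros e He. destruct (Hev e He) as [n [Hn _]].
    pose proof (sqnorm_ge0 (hsub v (u n))). lra. }
  assert (Hdl : forall dl, 0 < dl -> sqnorm (hsub v q) <= (1 + dl) * d).
  { intros dl Hdl. apply Rmult_le_reg_l with dl; [exact Hdl|].
    apply le_of_le_add_eps. intros eps Heps.
    set (e := eps / ((1 + dl) * (1 + dl))).
    assert (He : 0 < e) by (unfold e; apply Rdiv_lt_0_compat; nra).
    assert (Ee : (1 + dl) * (1 + dl) * e = eps) by (unfold e; field; lra).
    destruct (Hev e He) as [n [Hn1 Hn2]].
    replace (hsub v q) with (hadd X (hsub v (u n)) (hsub (u n) q)) by lin.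
    pose proof (sqnorm_add_le dl (hsub v (u n)) (hsub (u n) q) Hdl).
    nra. }
  apply le_of_le_add_eps. intros eps Heps.
  specialize (Hdl (eps / (d + 1)) ltac:(apply Rdiv_lt_0_compat; lra)).
  assert (eps / (d + 1) * d <= eps); [|nra].
  apply Rmult_le_reg_r with (d + 1); [lra|].
  replace (eps / (d + 1) * d * (d + 1)) with (eps * d) by (field; lra). nra.
Qed.

(* Among points [q + t m] of [M], the choice [t = s <v - q, m>] with small [s > 0]
   would get strictly closer to [v] unless [<v - q, m> = 0]. *)
Lemma minimizer_perp (M : X -> Prop) v q : is_subspace M -> M q ->
  (forall m, M m -> sqnorm (hsub v q) <= sqnorm (hsub v m)) -> perp M (hsub v q).
Proof.
  intros [_ [Madd Mscal]] Mq Hmin m Mm.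
  set (w := hsub v q). set (c := hinner X w m).
  set (s := / (sqnorm m + 1)).
  pose proof (sqnorm_ge0 m) as Nm.
  assert (Hs : 0 < s) by (apply Rinv_0_lt_compat; lra).
  assert (Hs1 : s * sqnorm m < 1).
  { unfold s. apply Rmult_lt_reg_l with (sqnorm m + 1); [lra|]. field_simplify; lra. }
  set (t := mkC (s * Cre c) (s * Cim c)).
  pose proof (Hmin _ (Madd _ _ Mq (Mscal t _ Mm))) as Ht.
  replace (hsub v (hadd X q (hscal X t m))) with
    (hadd X (hscal X C1 w) (hscal X (mkC (- (s * Cre c)) (- (s * Cim c))) m))
    in Ht by (unfold w, t; lin).
  rewrite sqnorm_lincomb2 in Ht. simpl in Ht. fold c in Ht.
  replace (sqnorm (hsub v q)) with (sqnorm (hadd X (hscal X C1 w) (hscal X C0 m))) in Ht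
    by (f_equal; unfold w; lin).
  rewrite sqnorm_lincomb2 in Ht. simpl in Ht.
  set (K := Cre c * Cre c + Cim c * Cim c) in *.
  assert (HK : 0 <= K) by (unfold K; nra).
  assert (K <= 0).
  { assert (2 * s * K <= s * s * K * sqnorm m) by (unfold K in *; nra).
    assert (2 * K <= s * K * sqnorm m) by (apply Rmult_le_reg_l with s; nra).
    nra. }
  apply C_ext; simpl; fold w; fold c; unfold K in *; nra.
Qed.

Lemma exists_minimizer (M : X -> Prop) v : is_closed_subspace M ->
  exists q, M q /\ forall m, M m -> sqnorm (hsub v q) <= sqnorm (hsub v m).
Proof.
  intros [[M0 [Madd Mscal]] Mcl].
  destruct (exists_infimum _ M (fun m => sqnorm (hsub v m))) as [d [Hlow Happrox]];
    [now exists (hzero X) | intros m _; apply sqnorm_ge0 |].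
  destruct (choice (fun n m => M m /\ sqnorm (hsub v m) < d + / INR (S n)))
    as [u Hu]; [intro n; apply Happrox, inv_INR_S_pos|].
  assert (Hcauchy : forall n k,
             sqnorm (hsub (u n) (u k)) <= 2 * / INR (S n) + 2 * / INR (S k)).
  { intros n k. destruct (Hu n) as [Mn Nn], (Hu k) as [Mk Nk].
    set (h := mkC (/2) 0).
    pose proof (sqnorm_sub_le_midpoint v (u n) (u k) d
                  (Hlow _ (Madd _ _ (Mscal h _ Mn) (Mscal h _ Mk)))).
    lra. }
  destruct (hcomplete X u) as [q Hq].
  { intros eps Heps. destruct (inv_INR_S_small (eps * eps / 4)) as [N0 HN0]; [nra|].
    exists N0. intros n k Hn Hk.
    rewrite <- (sqrt_square eps) by lra. apply sqrt_lt_1; [apply sqnorm_ge0 | nra |].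
    pose proof (Hcauchy n k). pose proof (HN0 n Hn). pose proof (HN0 k Hk).
    change (sqnorm (hsub (u n) (u k)) < eps * eps). lra. }
  exists q. split; [apply (Mcl u q); [intro n; apply Hu | exact Hq]|].
  intros m Mm. apply Rle_trans with d; [|now apply Hlow].
  apply (sqnorm_limit_le u); [exact Hq|].
  intros e He. destruct (inv_INR_S_small e He) as [N0 HN0]. exists N0. intros n Hn.
  destruct (Hu n) as [_ Nn]. specialize (HN0 n Hn). lra.
Qed.

Lemma is_proj_exists (M : X -> Prop) v : is_closed_subspace M -> exists q, is_proj M v q.
Proof.
  intro HM. destruct (exists_minimizer M v HM) as [q [Mq Hq]].
  exists q. split; [exact Mq | exact (minimizer_perp M v q (proj1 HM) Mq Hq)].
Qed.

Lemma proj_spec (M : X -> Prop) v : is_closed_subspace M ->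
  is_proj (perp M) v (proj (perp M) v).
Proof.
  intro HM. unfold proj. apply epsilon_spec.
  destruct (is_proj_exists M v HM) as [q [Mq Hq]].
  exists (hsub v q). split; [exact Hq|].
  replace (hsub v (hsub v q)) with q by lin. now apply perp_perp.
Qed.

Lemma is_proj_unique (M : X -> Prop) v p p' :
  is_proj (perp M) v p -> is_proj (perp M) v p' -> p = p'.
Proof.
  intros [Hp Hvp] [Hp' Hvp']. apply eq_of_hsub0, sqnorm_eq0.
  assert (Hd : perp M (hsub p p')) by now apply perp_sub.
  unfold sqnorm. replace (hsub p p') with (hsub (hsub v p') (hsub v p)) at 1 by lin.
  rewrite hinner_subl, Hvp', Hvp by auto. simpl; ring.
Qed.

Lemma is_proj_add (M : X -> Prop) u v p q :
  is_proj (perp M) u p -> is_proj (perp M) v q ->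
  is_proj (perp M) (hadd X u v) (hadd X p q).
Proof.
  intros [Hp Hup] [Hq Hvq]. split; [now apply perp_add|].
  replace (hsub (hadd X u v) (hadd X p q)) with (hadd X (hsub u p) (hsub v q)) by lin.
  now apply perp_add.
Qed.

Lemma is_proj_self (M : X -> Prop) v : perp M v -> is_proj (perp M) v v.
Proof.
  intro Hv. split; [exact Hv|]. replace (hsub v v) with (hzero X) by lin. apply perp_0.
Qed.

Lemma is_proj_0 (M : X -> Prop) v : M v -> is_proj (perp M) v (hzero X).
Proof.
  intro Hv. split; [apply perp_0|]. replace (hsub v (hzero X)) with v by lin.
  now apply perp_perp.
Qed.

Lemma is_proj_inner (M : X -> Prop) u p y :
  is_proj (perp M) u p -> perp M y -> hinner X p y = hinner X u y.
Proof.
  intros [_ Hup] Hy. pose proof (Hup y Hy) as E. rewrite hinner_subl in E.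
  destruct (hinner X p y), (hinner X u y). injection E. simpl. intros.
  apply C_ext; simpl; lra.
Qed.

End Projection.

Section Relations.
Context {X : Hilbert}.

Lemma converges_const (x : X) : converges (fun _ => x) x.
Proof.
  intros eps Heps. exists 0%nat. intros n _. unfold hnorm.
  replace (hsub x x) with (hzero X) by lin.
  change (sqrt (sqnorm (hzero X)) < eps). now rewrite sqnorm_0, sqrt_0.
Qed.

Lemma mul0_closed_subspace (T : rel X) :
  closed_subspace T -> is_closed_subspace (mul0 T).
Proof.
  intros [[T0 [Tadd Tscal]] Tcl]. unfold mul0. split; [split; [exact T0|split]|].
  - intros x y Hx Hy. pose proof (Tadd _ _ _ _ Hx Hy) as E. now rewrite hadd_0l in E.
  - intros a x Hx. pose proof (Tscal a _ _ Hx) as E. now rewrite hscal_0r in E.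
  - intros u q Hu Hc. apply (Tcl (fun _ => hzero X) u); auto. apply converges_const.
Qed.

Lemma rel_hsub (S : rel X) : is_linear_rel S ->
  forall x f y g, S x f -> S y g -> S (hsub x y) (hsub f g).
Proof.
  intros [_ [Sadd Sscal]] x f y g Hf Hg. unfold hsub. rewrite !hopp_scal. auto.
Qed.

Lemma rel_mul0_sub (S : rel X) x f g :
  is_linear_rel S -> S x f -> S x g -> mul0 S (hsub f g).
Proof.
  intros HS Hf Hg. unfold mul0. replace (hzero X) with (hsub x x) by lin.
  now apply (rel_hsub S HS).
Qed.

Lemma op_part_spec (S : rel X) x :
  closed_subspace S -> dom S x -> op_part_rel S x (op_part S x).
Proof.
  intros HS [f Hf]. unfold op_part. apply epsilon_spec.
  destruct (is_proj_exists (mul0 S) f (mul0_closed_subspace S HS)) as [q [Sq Hq]].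
  exists (hsub f q). split; [|exact Hq].
  replace x with (hsub x (hzero X)) by lin. exact (rel_hsub S (proj1 HS) _ _ _ _ Hf Sq).
Qed.

Lemma hermitian_ext (T T' : rel X) :
  (forall x h, T x h <-> T' x h) -> hermitian_rel T' -> hermitian_rel T.
Proof.
  intros E HT' x f Hf y g Hg. apply (HT' x f); now apply E.
Qed.

Lemma rel_sum_hermitian (S A : rel X) :
  hermitian_rel S -> hermitian_rel A -> hermitian_rel (rel_sum S A).
Proof.
  intros HS HA x h [f [g [Sf [Ag ->]]]] y k [f' [g' [Sf' [Ag' ->]]]].
  rewrite hinner_addl, hinner_addr, (HS x f Sf y f' Sf'), (HA x g Ag y g' Ag').
  reflexivity.
Qed.

Lemma hermitian_dom_perp_mul0 (T : rel X) y :
  hermitian_rel T -> dom T y -> perp (mul0 T) y.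
Proof.
  intros HT [h Hh] w Hw. rewrite <- (HT y h Hh (hzero X) w Hw). apply hinner_0r.
Qed.

Lemma proj_op_part_symmetric (S : rel X) (M : X -> Prop) x y :
  closed_subspace S -> hermitian_rel S -> is_closed_subspace M ->
  dom S x -> dom S y -> perp M x -> perp M y ->
  hinner X (proj (perp M) (op_part S x)) y = hinner X x (proj (perp M) (op_part S y)).
Proof.
  intros HS Hherm HM Hx Hy Mx My.
  destruct (op_part_spec S x HS Hx) as [Sx _], (op_part_spec S y HS Hy) as [Sy _].
  rewrite (is_proj_inner M _ _ y (proj_spec M _ HM) My).
  rewrite (hinner_conj X (proj _ _) x), (is_proj_inner M _ _ x (proj_spec M _ HM) Mx).
  rewrite <- hinner_conj. exact (Hherm x _ Sx y _ Sy).
Qed.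

End Relations.

Section SumDecomposition.
Context {X : Hilbert}.
Variables T S A : rel X.
Hypothesis HT : closed_subspace T.
Hypothesis HS : closed_subspace S.
Hypothesis HA : closed_subspace A.
Hypothesis Hsum : forall x h, T x h <-> rel_sum S A x h.

Lemma mul0_sum_l : subset (mul0 S) (mul0 T).
Proof.
  intros f Hf. apply Hsum. exists f, (hzero X).
  split; [exact Hf | split; [apply HA | now rewrite hadd_0r]].
Qed.

Lemma mul0_sum_r : subset (mul0 A) (mul0 T).
Proof.
  intros g Hg. apply Hsum. exists (hzero X), g.
  split; [apply HS | split; [exact Hg | now rewrite hadd_0l]].
Qed.

Lemma op_part_sum x : dom S x -> dom A x ->
  op_part T x = hadd X (proj (perp (mul0 T)) (op_part S x)) (proj (perp (mul0 T)) (op_part A x)).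
Proof.
  intros HxS HxA.
  assert (HxT : dom T x).
  { destruct HxS as [f Hf], HxA as [g Hg]. exists (hadd X f g). apply Hsum. now exists f, g. }
  destruct (op_part_spec T x HT HxT) as [Tt Pt].
  destruct (proj1 (Hsum x _) Tt) as [f [g [Sf [Ag Et]]]].
  destruct (op_part_spec S x HS HxS) as [Ss _], (op_part_spec A x HA HxA) as [Aa _].
  set (t0 := hadd X (hsub f (op_part S x)) (hsub g (op_part A x))).
  assert (Mt0 : mul0 T t0).
  { apply Hsum. exists (hsub f (op_part S x)), (hsub g (op_part A x)).
    split; [exact (rel_mul0_sub S x _ _ (proj1 HS) Sf Ss)|].
    split; [exact (rel_mul0_sub A x _ _ (proj1 HA) Ag Aa) | reflexivity]. }
  pose proof (mul0_closed_subspace T HT) as MT.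
  apply (is_proj_unique (mul0 T) (op_part T x)); [now apply is_proj_self|].
  rewrite <- (hadd_0r (hadd X _ _)).
  replace (op_part T x) with (hadd X (hadd X (op_part S x) (op_part A x)) t0)
    by (rewrite Et; unfold t0; lin).
  apply is_proj_add; [apply is_proj_add; apply proj_spec, MT | now apply is_proj_0].
Qed.

End SumDecomposition.

Theorem theorem3p1 (X : Hilbert) (T S A : rel X) :
  closed_subspace T -> closed_subspace S -> closed_subspace A ->
  (forall x, dom T x <-> dom S x) ->
  (forall x, dom T x -> dom A x) ->
  (forall x h, T x h <-> rel_sum S A x h) ->
  subset (perp (mul0 T)) (perp (mul0 S)) /\
  subset (perp (mul0 T)) (perp (mul0 A)) /\
  (forall x, dom T x ->
     op_part T x =
     hadd X (proj (perp (mul0 T)) (op_part S x)) (proj (perp (mul0 T)) (op_part A x))) /\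
  (hermitian_rel S -> hermitian_rel A ->
     forall x y, dom T x -> dom T y ->
       hinner X (proj (perp (mul0 T)) (op_part S x)) y =
         hinner X x (proj (perp (mul0 T)) (op_part S y)) /\
       hinner X (proj (perp (mul0 T)) (op_part A x)) y =
         hinner X x (proj (perp (mul0 T)) (op_part A y))).
Proof.
  intros HT HS HA HdS HdA Hsum.
  split; [exact (perp_antitone _ _ (mul0_sum_l T S A HA Hsum))|].
  split; [exact (perp_antitone _ _ (mul0_sum_r T S A HS Hsum))|].
  split; [intros x Hx; apply op_part_sum; auto; now apply HdS|].
  intros HhS HhA x y Hx Hy.
  pose proof (mul0_closed_subspace T HT) as MT.
  assert (HxS : dom S x) by now apply HdS. assert (HyS : dom S y) by now apply HdS.
  assert (HxA : dom A x) by now apply HdA. assert (HyA : dom A y) by now apply HdA.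
  assert (Hperp : forall z, dom T z -> perp (mul0 T) z).
  { intros z Hz. apply hermitian_dom_perp_mul0; [|exact Hz].
    apply (hermitian_ext T _ Hsum), rel_sum_hermitian; assumption. }
  split; apply proj_op_part_symmetric; auto.
Qed.
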